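(* Let $p\geq 1$ and let $n_0<n_1<\cdots<n_p$ be positive integers with $n_i=n_0+id$ for a fixed positive integer $d$, such that $\gcd(n_0,\dots,n_p)=1$ and $\{n_0,\dots,n_p\}$ minimally generates the numerical semigroup $S_1=\langle n_0,\dots,n_p\rangle$. Then the Apéry set $\mathrm{Ap}(S_1,n_p)$ is a homogeneous subset of $S_1$.
   Context: For a numerical semigroup $T=\langle n_0,\dots,n_p\rangle$ and $0\neq a\in T$, the Apéry set is $\mathrm{Ap}(T,a)=\{s\in T: s-a\notin T\}$. For $0\neq s\in T$, the set of lengths is $\mathcal{L}(s)=\{\sum_{i=0}^p\lambda_i : s=\sum_{i=0}^p\lambda_in_i,\ \lambda_i\in\mathbb{N}\}$. A subset $A\subseteq T$ is homogeneous if it is empty or $\mathcal{L}(s)$ is a singleton for every $0\neq s\in A$. *)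

From mathcomp Require Import all_boot.
Set Implicit Arguments. Unset Strict Implicit. Unset Printing Implicit Defensive.

(* A numerical semigroup T = <g 0, ..., g p> is given by its generator
   function g : nat -> nat (only indices 0..p matter). *)

Definition in_sgp (g : nat -> nat) (p s : nat) : Prop :=
  exists lam : nat -> nat, s = \sum_(i < p.+1) lam i * g i.

Definition lengths (g : nat -> nat) (p s : nat) (l : nat) : Prop :=
  exists lam : nat -> nat,
    s = \sum_(i < p.+1) lam i * g i /\ l = \sum_(i < p.+1) lam i.

(* Apery set Ap(T, a) = { s in T : s - a not in T } (s - a integer difference:
   if s < a then s - a is negative, hence not in T). *)
Definition apery (g : nat -> nat) (p a s : nat) : Prop :=
  in_sgp g p s /\ ~ (a <= s /\ in_sgp g p (s - a)).

Definition homogeneous_subset (g : nat -> nat) (p : nat) (A : nat -> Prop) : Prop :=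
  (forall s, A s -> in_sgp g p s) /\
  (forall s, A s -> s <> 0 -> exists l, forall l', lengths g p s l' <-> l' = l).

Definition minimal_gens (g : nat -> nat) (p : nat) : Prop :=
  forall j : 'I_p.+1, ~ exists lam : nat -> nat,
      g j = \sum_(i < p.+1 | i != j) lam i * g i.

Definition gcd_gens (g : nat -> nat) (p : nat) : nat := \big[gcdn/0]_(i < p.+1) g i.

From mathcomp Require Import all_boot.
From mathcomp Require Import zify.

Set Implicit Arguments. Unset Strict Implicit. Unset Printing Implicit Defensive.

(* A factorization [s = \sum_i lam_i n_i] of length [l = \sum_i lam_i] gives
   [s = n0 l + d A] with [A = \sum_i lam_i i], and conversely every pair
   [(l, A)] with [A <= p l] arises this way.  If [A >= p] we can peel off one
   copy of [n_p = n0 + p d], so on the Apery set of [n_p] every factorization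
   has [A < p].  Two such factorizations of lengths [l1 < l2] would give
   [n0 (l2 - l1) = d (A1 - A2)] with [0 < A1 - A2 < p], i.e. the generator
   [n_(A1 - A2)] would be the multiple [(l2 - l1 + 1) n0] of [n0],
   contradicting minimality. *)

Lemma sum_ord_eq_mul (F : nat -> nat) (n j : nat) :
  j < n -> \sum_(i < n) (i == j :> nat) * F i = F j.
Proof.
by move=> ltjn; under eq_bigr do rewrite mulnbl; rewrite -big_mkcond big_ord1_eq ltjn.
Qed.

Lemma in_sgp_lengths (g : nat -> nat) (p s : nat) :
  in_sgp g p s <-> exists l, lengths g p s l.
Proof.
split=> [[lam Es] | [l [lam [Es _]]]]; last by exists lam.
by exists (\sum_(i < p.+1) lam i), lam.
Qed.

Lemma minimal_gens_neq_mul_g0 (g : nat -> nat) (p k m : nat) :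
  minimal_gens g p -> 0 < k <= p -> g k <> m * g 0.
Proof.
move=> ming /andP[k_gt0 le_kp] Egk.
have ltkp : k < p.+1 by [].
apply: (ming (Ordinal ltkp)); exists (fun i => if i == 0 then m else 0).
rewrite (bigD1 ord0) /=; last by rewrite -val_eqE /= eq_sym -lt0n.
by rewrite big1 ?addn0 // => -[[|i] ?] /andP[_]; rewrite -val_eqE.
Qed.

Section ArithmeticGenerators.

Variables p n0 d : nat.

Local Notation n := (fun i : nat => n0 + i * d).

Lemma sum_mul_arith (lam : nat -> nat) :
  \sum_(i < p.+1) lam i * n i =
  n0 * \sum_(i < p.+1) lam i + d * \sum_(i < p.+1) lam i * i.
Proof. by rewrite !big_distrr -big_split /=; apply: eq_bigr => i _; lia. Qed.

Lemma sum_mul_index_le (lam : nat -> nat) :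
  \sum_(i < p.+1) lam i * i <= p * \sum_(i < p.+1) lam i.
Proof.
by rewrite big_distrr /=; apply: leq_sum => i _; have := ltn_ord i; nia.
Qed.

Lemma exists_coefs_sum_index (l A : nat) : A <= p * l ->
  exists mu : nat -> nat,
    \sum_(i < p.+1) mu i = l /\ \sum_(i < p.+1) mu i * i = A.
Proof.
elim: l A => [|l IHl] A le_A.
  by exists (fun=> 0); rewrite !big1 //; lia.
pose j := minn A p; have ltjp : j < p.+1 by lia.
have [mu [Emu_sum Emu_idx]] := IHl (A - j) ltac:(lia).
exists (fun i => mu i + (i == j)); split.
  rewrite big_split /= Emu_sum.
  under eq_bigr do rewrite -[(_ == j) : nat]muln1.
  by rewrite (sum_ord_eq_mul (fun=> 1)) ?addn1.
under eq_bigr do rewrite mulnDl.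
by rewrite big_split /= Emu_idx (sum_ord_eq_mul id) //; lia.
Qed.

Lemma lengths_arithP (s l : nat) :
  lengths n p s l <-> exists2 A, A <= p * l & s = n0 * l + d * A.
Proof.
split=> [[lam [Es El]] | [A le_A Es]].
  by exists (\sum_(i < p.+1) lam i * i); rewrite El ?sum_mul_index_le // Es sum_mul_arith.
have [mu [Emu_sum Emu_idx]] := exists_coefs_sum_index le_A.
by exists mu; rewrite sum_mul_arith Emu_sum Emu_idx.
Qed.

Lemma apery_index_sum_lt (s l A : nat) : 0 < p ->
  apery n p (n p) s -> A <= p * l -> s = n0 * l + d * A -> A < p.
Proof.
move=> p_gt0 [_ not_shift] le_A Es; rewrite ltnNge; apply/negP => le_pA.
case: l le_A Es => [|l] le_A Es; first by nia.
apply: not_shift; split=> /=; first by nia.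
apply/in_sgp_lengths; exists l; apply/lengths_arithP.
by exists (A - p); nia.
Qed.

Lemma index_sum_lt_length_unique (l1 l2 A1 A2 : nat) :
  0 < n0 -> minimal_gens n p -> A1 < p -> A2 < p ->
  n0 * l1 + d * A1 = n0 * l2 + d * A2 -> l1 = l2.
Proof.
move=> n0_gt0 ming; wlog le_l12 : l1 l2 A1 A2 / l1 <= l2 => [hwlog|] ltA1 ltA2 E.
  case: (leqP l1 l2) => [le_l | /ltnW le_l]; first exact: hwlog le_l ltA1 ltA2 E.
  exact/esym/(hwlog _ _ _ _ le_l ltA2 ltA1 (esym E)).
apply/eqP; rewrite eqn_leq le_l12 leqNgt; apply/negP => lt_l12.
have lt_A21 : A2 < A1 by nia.
apply: (@minimal_gens_neq_mul_g0 _ _ (A1 - A2) (l2 - l1).+1 ming) => /=; nia.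
Qed.

End ArithmeticGenerators.

Theorem lemma4p3 (p n0 d : nat) :
  1 <= p -> 0 < n0 -> 0 < d ->
  gcd_gens (fun i => n0 + i * d) p = 1 ->
  minimal_gens (fun i => n0 + i * d) p ->
  homogeneous_subset (fun i => n0 + i * d) p
    (apery (fun i => n0 + i * d) p (n0 + p * d)).
Proof.
move=> p_gt0 n0_gt0 _ _ ming; split=> [s [] // | s aps _].
have /in_sgp_lengths[l0 len0] := aps.1.
exists l0 => l; split=> [len | ->] //.
move/lengths_arithP: len0 => [A0 le_A0 E0]; move/lengths_arithP: len => [A le_A E].
apply: (index_sum_lt_length_unique n0_gt0 ming (apery_index_sum_lt p_gt0 aps le_A E)
          (apery_index_sum_lt p_gt0 aps le_A0 E0)).
by rewrite -E -E0.
Qed.
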